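(* Let $W=W(A_n)$ with generators $s_1,\dots,s_n$ ($s_i$, $s_j$ commuting iff $|i-j|\ge2$, and $s_is_{i+1}s_i=s_{i+1}s_is_{i+1}$). Let $w=s_1s_2\cdots s_{n-1}s_ns_{n-1}\cdots s_2s_1$ (this expression is reduced), and let $x\in W$ be a Coxeter element, i.e. $x=s_{\pi(1)}s_{\pi(2)}\cdots s_{\pi(n)}$ for some permutation $\pi$ of $\{1,\dots,n\}$. Then: (i) $x\le w$; (ii) the Bruhat interval $[x,w]$ is isomorphic, as a poset, to the Boolean lattice of rank $\ell(w)-\ell(x)$; (iii) every $y\in W$ with $x<y\le w$ is not fully commutative.
   Context: $\ell$ is the Coxeter length and $\le$ the Bruhat order on $W$. An element of $W$ is fully commutative if any two of its reduced expressions are related by a sequence of moves $ss'\leftrightarrow s's$ with $s,s'$ commuting generators. *)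

(* W(A_n) is realised as the symmetric group 'S_(n.+1);
   the generator s_(i+1) (paper's 1-based index) is the adjacent
   transposition gen i = (i, i+1), for i : 'I_n (0-based). *)
From HB Require Import structures.
From mathcomp Require Import all_boot all_order all_fingroup.
From Stdlib Require Import Relations ClassicalEpsilon.
Set Implicit Arguments. Unset Strict Implicit. Unset Printing Implicit Defensive.

Definition gen (n : nat) (i : 'I_n) : 'S_n.+1 :=
  tperm (widen_ord (leqnSn n) i) (lift ord0 i).

Definition weval (n : nat) (t : seq 'I_n) : 'S_n.+1 :=
  foldr (fun i acc => (gen i * acc)%g) 1%g t.

Definition has_expr_of_size (n : nat) (w : 'S_n.+1) (k : nat) : bool :=
  [exists t : k.-tuple 'I_n, weval t == w].

(* Coxeter length: the minimal size of an expression of w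
   (classical case split only to avoid proving generation here). *)
Definition coxlen (n : nat) (w : 'S_n.+1) : nat :=
  match excluded_middle_informative (exists k, has_expr_of_size w k) with
  | left H => ex_minn H
  | right _ => 0
  end.

Definition reduced_expr (n : nat) (w : 'S_n.+1) (t : seq 'I_n) : Prop :=
  weval t = w /\ size t = coxlen w.

Definition reflection (n : nat) (t : 'S_n.+1) : Prop :=
  exists (g : 'S_n.+1) (i : 'I_n), t = (g^-1 * gen i * g)%g.

Definition bruhat_step (n : nat) (u v : 'S_n.+1) : Prop :=
  exists t, reflection t /\ v = (u * t)%g /\ coxlen u < coxlen v.

Definition bruhat (n : nat) (u v : 'S_n.+1) : Prop :=
  clos_refl_trans _ (@bruhat_step n) u v.

Definition comm_move (n : nat) (t1 t2 : seq 'I_n) : Prop :=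
  exists (a b : seq 'I_n) (i j : 'I_n),
    (gen i * gen j = gen j * gen i)%g /\
    t1 = a ++ [:: i; j] ++ b /\ t2 = a ++ [:: j; i] ++ b.

Definition fully_commutative (n : nat) (y : 'S_n.+1) : Prop :=
  forall t1 t2, reduced_expr y t1 -> reduced_expr y t2 ->
    clos_refl_trans _ (@comm_move n) t1 t2.

(* the word s_1 s_2 ... s_(n-1) s_n s_(n-1) ... s_2 s_1 *)
Definition wword (n : nat) : seq 'I_n :=
  enum 'I_n ++ behead (rev (enum 'I_n)).

Definition interval_boolean (n : nat) (x w : 'S_n.+1) (r : nat) : Prop :=
  exists f : 'S_n.+1 -> {set 'I_r},
    (forall A : {set 'I_r}, exists y, [/\ bruhat x y, bruhat y w & f y = A]) /\
    (forall y z, bruhat x y -> bruhat y w -> bruhat x z -> bruhat z w ->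
       f y = f z -> y = z) /\
    (forall y z, bruhat x y -> bruhat y w -> bruhat x z -> bruhat z w ->
       (bruhat y z <-> f y \subset f z)).

From HB Require Import structures.
From mathcomp Require Import all_boot all_order all_fingroup.
From mathcomp Require Import zify.
From Stdlib Require Import Relations ClassicalEpsilon.
Set Implicit Arguments. Unset Strict Implicit. Unset Printing Implicit Defensive.

(* W(A_n) is the symmetric group on {0, ..., n}, the generator s_(i+1) being
   the transposition (i i+1); w evaluates to the transposition (0 n) and
   x = s_(pi 1) ... s_(pi n) is a Coxeter element.  The proof is combinatorial.
   - The Coxeter length is the number of inversions, and a Bruhat step
     u -> u t swaps the values at two positions p < q with u p < u q.
   - The crossing counts #{z <= i < u z} are monotone for the Bruhat order
     and equal to one for x and for w, so every y in [x, w] is one-crossing.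
   - For one-crossing permutations, excising a non-fixed interior point k,
     y -> y (k, y k), is a Bruhat step adding one inversion.  Comparing
     lengths at both ends gives l(y) = n + #(fixed points of y) on [x, w],
     so every Bruhat step inside the interval is an excision.
   - Hence the elements of [x, w] are shortcuts of x, determined by their
     fixed points, and every set of interior fixed points is reached by
     excisions: y |-> fixed points of y is an isomorphism onto the Boolean
     lattice of rank n - 1 = l(w) - l(x).
   - An element above x fixes an interior point, which is the middle of a
     321 pattern; a 321 pattern yields a reduced word with a braid factor
     s_j s_(j+1) s_j, so the element is not fully commutative. *)

(* Routine case-analysis automation for the permutation arithmetic below.
   [ord_neq_nat] turns disequalities of ordinals into disequalities of their
   values so that [lia] can use them; [case_ifs] splits every innermost
   [if] of the goal; [tperm_cases p q z] distinguishes z = p, z = q and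
   the remaining case when evaluating [tperm p q z]. *)
Ltac ord_neq_nat :=
  repeat match goal with
  | H : is_true (?a != ?b) |- _ =>
      let H' := fresh in
      (have H' : (nat_of_ord a != nat_of_ord b) by rewrite (inj_eq val_inj)); clear H
  | H : ?a <> ?b |- _ =>
      let H' := fresh in (have H' : (nat_of_ord a <> nat_of_ord b) by move/val_inj); clear H
  end.

Ltac case_ifs := repeat match goal with
 | |- context [if ?c then _ else _] =>
    lazymatch c with context [if _ then _ else _] => fail
    | _ => let H := fresh "Hif" in destruct c eqn:H end
 end.

Ltac tperm_cases p q z :=
  case: (eqVneq z p) => [?|?];
  [subst z; rewrite ?tpermL
  | case: (eqVneq z q) => [?|?];
    [subst z; rewrite ?tpermR
    | rewrite ?(@tpermD _ p q z) ?(eq_sym p) ?(eq_sym q) //]].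

Section Words.
Variable n : nat.
Implicit Types (i : 'I_n) (t : seq 'I_n).

Lemma tpermE_if (T : finType) (x y z : T) :
  tperm x y z = if z == x then y else if z == y then x else z.
Proof.
by case: tpermP => [->|->|/eqP/negbTE-> /eqP/negbTE->]; rewrite ?eqxx //; case: eqP => // ->.
Qed.

Lemma gen_val i (z : 'I_n.+1) :
  (gen i z : nat) =
  if (z : nat) == i then i.+1 else if (z : nat) == i.+1 then (i : nat) else (z : nat).
Proof.
rewrite /gen tpermE_if.
have -> : (z == widen_ord (leqnSn n) i) = ((z : nat) == i) by [].
have -> : (z == lift ord0 i) = ((z : nat) == i.+1) by [].
by case: eqP => //= _; case: eqP.
Qed.

Lemma gen_fix i (z : 'I_n.+1) : (z : nat) != i -> (z : nat) != i.+1 -> gen i z = z.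
Proof. by move=> h1 h2; apply: ord_inj; rewrite gen_val (negbTE h1) (negbTE h2). Qed.

Lemma gen_invol i : (gen i * gen i)%g = 1%g.
Proof. by rewrite /gen tperm2. Qed.

Lemma lift0_val i : (lift ord0 i : nat) = i.+1.
Proof. by rewrite /= /bump leq0n. Qed.

Lemma weval_cons i t : weval (i :: t) = (gen i * weval t)%g.
Proof. by []. Qed.

Lemma weval_cat (s t : seq 'I_n) : weval (s ++ t) = (weval s * weval t)%g.
Proof. by elim: s => [|i s IH] /=; rewrite ?mul1g // IH mulgA. Qed.

Lemma weval_rcons t i : weval (rcons t i) = (weval t * gen i)%g.
Proof. by rewrite -cats1 weval_cat /= mulg1. Qed.

End Words.

(* The Coxeter length of a permutation is its number of
   inversions: a generator changes that number by exactly one, and a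
   permutation with an inversion has a descent that can be peeled off. *)
Section Length.
Variable n : nat.
Implicit Types (u v : 'S_n.+1) (i : 'I_n) (t : seq 'I_n).

Definition inversions u : {set 'I_n.+1 * 'I_n.+1} :=
  [set ij : 'I_n.+1 * 'I_n.+1 | ((ij.1 : nat) < ij.2) && ((u ij.2 : nat) < u ij.1)].

Definition ninv u := #|inversions u|.

Lemma in_inversions u a b :
  ((a, b) \in inversions u) = ((a : nat) < b) && ((u b : nat) < u a).
Proof. by rewrite inE. Qed.

(* Swapping the positions of a non-inversion p < q strictly increases the
   number of inversions: the pair (p, q) becomes one, and conjugating by
   the swap away from ]p, q[ maps the old inversions injectively to new. *)
Lemma ninv_tperm_lt u (p q : 'I_n.+1) :
  (p : nat) < q -> (u p : nat) < u q -> ninv u < ninv (tperm p q * u)%g.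
Proof.
move=> hpq hu; set v := (tperm p q * u)%g.
have hv z : v z = u (tperm p q z) by rewrite permM.
pose between (z : 'I_n.+1) := ((p : nat) < z) && ((z : nat) < q).
pose phi (ij : 'I_n.+1 * 'I_n.+1) :=
  if between ij.1 || between ij.2 then ij else (tperm p q ij.1, tperm p q ij.2).
have between_tperm z : between (tperm p q z) = between z.
  by rewrite /between; tperm_cases p q z; lia.
have phiK : involutive phi.
  move=> [a b]; rewrite /phi /=; case hb: (between a || between b) => /=.
    by rewrite hb.
  by rewrite !between_tperm hb !tpermK.
have phi_sub : phi @: inversions u \subset inversions v.
  apply/subsetP => _ /imsetP [[a b] hab ->].
  move: hab; rewrite in_inversions /phi /= => /andP [h1 h2].
  case: ifP => hb; rewrite in_inversions !hv ?tpermK; rewrite /between in hb;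
    tperm_cases p q a; tperm_cases p q b; ord_neq_nat; lia.
have pq_new : (p, q) \in inversions v.
  by rewrite in_inversions !hv tpermL tpermR hpq hu.
have pq_old : (p, q) \notin phi @: inversions u.
  apply/negP => /imsetP [[a b] hab e].
  have : (a, b) = phi (p, q) by rewrite e phiK.
  rewrite /phi /between /= tpermL tpermR; case: ifP; first lia.
  by move=> _ [ea eb]; subst a b; rewrite in_inversions in hab; lia.
rewrite /ninv -(card_imset _ (can_inj phiK)); apply: proper_card.
by rewrite properE phi_sub /=; apply/subsetPn; exists (p, q).
Qed.

Lemma ninv_gen_ascent u i :
  (u (widen_ord (leqnSn n) i) : nat) < u (lift ord0 i) ->
  ninv (gen i * u)%g = (ninv u).+1.
Proof.
set p := widen_ord (leqnSn n) i; set q := lift ord0 i => hu.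
have hp : (p : nat) = i by [].
have hq : (q : nat) = i.+1 by rewrite lift0_val.
apply/eqP; rewrite eqn_leq; apply/andP; split; last first.
  by apply: ninv_tperm_lt => //; rewrite hp hq.
set v := (gen i * u)%g.
have hv z : v z = u (tperm p q z) by rewrite permM.
pose psi (ij : 'I_n.+1 * 'I_n.+1) := (tperm p q ij.1, tperm p q ij.2).
have psiK : involutive psi by move=> [a b]; rewrite /psi /= !tpermK.
have psi_sub : psi @: (inversions v :\ (p, q)) \subset inversions u.
  apply/subsetP => _ /imsetP [[a b] /setD1P [hne hab] ->].
  move: hne hab; rewrite xpair_eqE in_inversions !hv in_inversions /psi /=.
  tperm_cases p q a; tperm_cases p q b; rewrite ?eqxx => hne hab; ord_neq_nat; lia.
have := subset_leq_card psi_sub; rewrite card_imset; last exact: can_inj psiK.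
rewrite /ninv (cardsD1 (p, q) (inversions v)).
by case: ((p, q) \in inversions v) => /=; rewrite ?add1n ?add0n // => /leqW.
Qed.

Lemma ninv_gen_descent u i :
  (u (lift ord0 i) : nat) < u (widen_ord (leqnSn n) i) ->
  (ninv (gen i * u)%g).+1 = ninv u.
Proof.
move=> hi; set u' := (gen i * u)%g.
have asc : (u' (widen_ord (leqnSn n) i) : nat) < u' (lift ord0 i).
  by rewrite !permM /gen tpermL tpermR.
by rewrite -(ninv_gen_ascent asc) /u' mulgA gen_invol mul1g.
Qed.

Lemma ninv_gen_le u i : ninv (gen i * u)%g <= (ninv u).+1.
Proof.
have : u (widen_ord (leqnSn n) i) != u (lift ord0 i).
  by rewrite (inj_eq perm_inj) -(inj_eq (@ord_inj _)) /= /bump leq0n; lia.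
rewrite -(inj_eq (@ord_inj _)) neq_ltn => /orP [h|h].
  by rewrite ninv_gen_ascent.
by rewrite -(ninv_gen_descent h); lia.
Qed.

Lemma ninv1 : ninv 1%g = 0.
Proof.
apply/eqP; rewrite cards_eq0; apply/eqP/setP => -[a b].
by rewrite in_inversions !perm1 inE; lia.
Qed.

Lemma ninv_weval_le t : ninv (weval t) <= size t.
Proof.
elim: t => [|i t IH] /=; first by rewrite ninv1.
by have := ninv_gen_le (weval t) i; lia.
Qed.

Lemma increasing_ge (f : 'I_n.+1 -> 'I_n.+1) :
  (forall a b : 'I_n.+1, (a : nat) < b -> (f a : nat) < f b) ->
  forall z : 'I_n.+1, (z : nat) <= f z.
Proof.
move=> hf z; have [k hk] : exists k, (z : nat) = k by eexists.
elim: k z hk => [|k IH] z hk; first lia.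
have hk' : k < n.+1 by have := ltn_ord z; lia.
by have := IH (Ordinal hk') erefl; have := hf (Ordinal hk') z; rewrite /=; lia.
Qed.

Lemma ninv_eq0 u : ninv u = 0 -> u = 1%g.
Proof.
move=> /eqP; rewrite cards_eq0 => /eqP h0.
have incr (a b : 'I_n.+1) : (a : nat) < b -> (u a : nat) < u b.
  move=> hab; have : (a, b) \notin inversions u by rewrite h0 inE.
  rewrite in_inversions hab /= -leqNgt leq_eqVlt => /orP [/eqP e|//].
  have /perm_inj eab : u a = u b by apply: val_inj.
  by rewrite eab in hab; lia.
have incrV (a b : 'I_n.+1) : (a : nat) < b -> ((u^-1)%g a : nat) < (u^-1)%g b.
  move=> hab; have : (u^-1)%g a != (u^-1)%g b.
    by rewrite (inj_eq perm_inj) -(inj_eq (@ord_inj _)) /=; lia.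
  rewrite -(inj_eq (@ord_inj _)) neq_ltn => /orP [//|h].
  by have := incr _ _ h; rewrite !permKV; lia.
apply/permP => z; apply: ord_inj; rewrite perm1.
by have := increasing_ge incr z; have := increasing_ge incrV (u z); rewrite permK; lia.
Qed.

Lemma exists_descent u : 0 < ninv u ->
  exists i : 'I_n, (u (lift ord0 i) : nat) < u (widen_ord (leqnSn n) i).
Proof.
rewrite /ninv card_gt0 => /set0Pn [[a b]]; rewrite in_inversions => /andP [].
have [k hk] : exists k, (b : nat) - a = k by eexists.
elim: k a hk => [|k IH] a hk hab hu; first lia.
have ha : (a : nat) < n by have := ltn_ord b; lia.
have hc : (a : nat).+1 < n.+1 by lia.
have ew : widen_ord (leqnSn n) (Ordinal ha) = a by apply: ord_inj.
have el : lift ord0 (Ordinal ha) = Ordinal hc by apply: ord_inj; rewrite lift0_val.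
have : u (Ordinal hc) != u a.
  by rewrite (inj_eq perm_inj) -(inj_eq (@ord_inj _)) /=; lia.
rewrite -(inj_eq (@ord_inj _)) neq_ltn => /orP [h|h].
  by exists (Ordinal ha); rewrite ew el.
case: (eqVneq (Ordinal hc) b) => [e|ne]; first by rewrite e in h; lia.
by apply: (IH (Ordinal hc)); ord_neq_nat; simpl in *; lia.
Qed.

Lemma exists_word_ninv u : exists t, weval t = u /\ size t = ninv u.
Proof.
have [k hk] : exists k, ninv u = k by eexists.
elim: k u hk => [|k IH] u hk.
  by exists [::]; rewrite hk {1}(ninv_eq0 hk).
have [i hi] := exists_descent (ltac:(lia) : 0 < ninv u).
have [t [ht hs]] := IH (gen i * u)%g (ltac:(have := ninv_gen_descent hi; lia)).
exists (i :: t); split; first by rewrite weval_cons ht mulgA gen_invol mul1g.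
by rewrite /= hs; have := ninv_gen_descent hi; lia.
Qed.

Lemma coxlenE u : coxlen u = ninv u.
Proof.
have [t [ht hs]] := exists_word_ninv u.
have hex : has_expr_of_size u (ninv u).
  by apply/existsP; exists (@Tuple _ _ t (introT eqP hs)); rewrite /= ht.
rewrite /coxlen; case: excluded_middle_informative => [H|H]; last first.
  by exfalso; apply: H; exists (ninv u).
case: ex_minnP => m /existsP [t' /eqP ht'] hmin.
apply/eqP; rewrite eqn_leq (hmin _ hex) /=.
by have := ninv_weval_le t'; rewrite size_tuple ht'.
Qed.

End Length.

Section BruhatSteps.
Variable n : nat.
Implicit Types (u v : 'S_n.+1).

Lemma reflection_tperm (r : 'S_n.+1) : reflection r ->
  exists a b : 'I_n.+1, a != b /\ r = tperm a b.
Proof.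
move=> [g [i ->]].
exists (g (widen_ord (leqnSn n) i)), (g (lift ord0 i)); split.
  by rewrite (inj_eq perm_inj) -(inj_eq (@ord_inj _)) /= /bump leq0n; lia.
by rewrite -tpermJ conjgE mulgA.
Qed.

Lemma tperm_reflection (hn : 0 < n) (a b : 'I_n.+1) : a != b -> reflection (tperm a b).
Proof.
move=> hab; set i0 : 'I_n := Ordinal hn.
set o0 : 'I_n.+1 := widen_ord (leqnSn n) i0; set o1 : 'I_n.+1 := lift ord0 i0.
set s := tperm o0 a; set g := (s * tperm (s o1) b)%g.
have o01 : o0 != o1 by rewrite -(inj_eq (@ord_inj _)) /= /bump; lia.
have g0 : g o0 = a.
  rewrite permM /s tpermL tpermD //; last by rewrite eq_sym.
  apply/negP => /eqP e; have : s o1 = s o0 by rewrite /s tpermL.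
  by move/perm_inj => e'; rewrite e' eqxx in o01.
have g1 : g o1 = b by rewrite permM tpermL.
by exists g, i0; rewrite -mulgA -conjgE /gen tpermJ g0 -/o1 g1.
Qed.

(* Right multiplication by a transposition of values is left multiplication
   by the transposition of the corresponding positions. *)
Lemma mul_tperm_conj u a b :
  (u * tperm a b)%g = (tperm ((u^-1)%g a) ((u^-1)%g b) * u)%g.
Proof. by rewrite -tpermJ conjgE invgK !mulgA mulgKV. Qed.

Lemma ninv_tperm_ascent u (p q : 'I_n.+1) : (p : nat) < q ->
  ninv u < ninv (tperm p q * u)%g -> (u p : nat) < u q.
Proof.
move=> hpq hlen; have : u p != u q.
  by rewrite (inj_eq perm_inj) -(inj_eq (@ord_inj _)) /=; lia.
rewrite -(inj_eq (@ord_inj _)) neq_ltn => /orP [//|h]; exfalso.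
set v := (tperm p q * u)%g.
have hv : (v p : nat) < v q by rewrite !permM tpermL tpermR.
have := ninv_tperm_lt hpq hv; rewrite /v mulgA tperm2 mul1g.
by move: hlen; rewrite -/v; lia.
Qed.

Lemma bruhat_stepP u v : bruhat_step u v ->
  exists p q : 'I_n.+1, [/\ (p : nat) < q, (u p : nat) < u q & v = (tperm p q * u)%g].
Proof.
move=> [r [/reflection_tperm [a [b [hab ->]]] [-> hl]]].
rewrite mul_tperm_conj !coxlenE in hl *.
have : (u^-1)%g a != (u^-1)%g b by rewrite (inj_eq perm_inj).
rewrite -(inj_eq (@ord_inj _)) neq_ltn => /orP [h|h].
  by do 2 eexists; split; [exact: h | exact: ninv_tperm_ascent h hl | by []].
rewrite tpermC in hl *.
by do 2 eexists; split; [exact: h | exact: ninv_tperm_ascent h hl | by []].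
Qed.

(* They are Bruhat-monotone, which confines the interval
   [x, w] to permutations with all crossing counts equal to one. *)
Definition crossing u (i : nat) : {set 'I_n.+1} :=
  [set z : 'I_n.+1 | ((z : nat) <= i) && (i < u z)].

Definition ncross u i := #|crossing u i|.

Lemma in_crossing u i z : (z \in crossing u i) = ((z : nat) <= i) && (i < u z).
Proof. by rewrite inE. Qed.

Lemma ncross_tperm u (p q : 'I_n.+1) i :
  (p : nat) < q -> (u p : nat) < u q ->
  ncross u i <= ncross (tperm p q * u)%g i /\
  ncross (tperm p q * u)%g i
    <= ncross u i + [&& (p : nat) <= i, i < q, (u p : nat) <= i & i < u q].
Proof.
move=> hpq hu; set v := (tperm p q * u)%g.
have hv z : v z = u (tperm p q z) by rewrite permM.
case: (boolP (((p : nat) <= i) && (i < q))) => hin; last first.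
  have e : crossing v i = tperm p q @^-1: crossing u i.
    by apply/setP => z; rewrite !inE hv; tperm_cases p q z; ord_neq_nat; lia.
  by rewrite /ncross e card_preimset; [lia | exact: perm_inj].
have s1 : crossing u i \subset crossing v i.
  by apply/subsetP => z; rewrite !in_crossing hv; tperm_cases p q z; ord_neq_nat; lia.
have s2 : crossing v i \subset p |: crossing u i.
  apply/subsetP => z; rewrite in_setU1 !in_crossing hv.
  by tperm_cases p q z; rewrite ?eqxx //; ord_neq_nat; lia.
split; first exact: subset_leq_card.
case: (boolP [&& (p : nat) <= i, i < q, (u p : nat) <= i & i < u q]) => hb.
  by have := subset_leq_card s2; rewrite cardsU1 /ncross; case: (p \in _) => /=; lia.
have s3 : crossing v i \subset crossing u i.
  apply/subsetP => z zv; have := subsetP s2 z zv; rewrite in_setU1 => /orP [/eqP e|//].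
  by move: zv hb; rewrite e !in_crossing hv tpermL; lia.
by have := subset_leq_card s3; rewrite /ncross; lia.
Qed.

Lemma ncross_bruhat u v i : bruhat u v -> ncross u i <= ncross v i.
Proof.
elim=> [y z /bruhat_stepP [p [q [hpq hu ->]]] | y // | y m z _ h1 _ h2].
  by have [] := ncross_tperm i hpq hu.
exact: leq_trans h1 h2.
Qed.

End BruhatSteps.

Section TheoremWords.
Variable n : nat.
Implicit Types (i : 'I_n) (t : seq 'I_n).

Lemma weval_ascending t m k : map val t = iota m k -> forall z : 'I_n.+1,
  (weval t z : nat) = if (z : nat) == m then m + k
                      else if (m < z) && (z <= m + k) then (z : nat) - 1 else z.
Proof.
elim: k m t => [|k IH] m [|i t] //=.
  by move=> _ z; rewrite perm1; case: eqP => [->|]; rewrite ?addn0 //; case: ifP => //; lia.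
case=> hi ht z; rewrite permM (IH _ _ ht) gen_val.
have -> : (i : nat) = m by [].
by case_ifs; lia.
Qed.

Lemma weval_descending t m k : map val t = rev (iota m k) -> forall z : 'I_n.+1,
  (weval t z : nat) = if (z : nat) == m + k then m
                      else if (m <= z) && (z < m + k) then (z : nat).+1 else z.
Proof.
elim: k m t => [|k IH] m t.
  by case: t => [_ z|//]; rewrite /= perm1 addn0; case_ifs; lia.
case/lastP: t => [|t i]; first by rewrite /= rev_cons; case: (rev _).
rewrite map_rcons /= rev_cons => /eqP; rewrite eqseq_rcons => /andP [/eqP ht /eqP hi] z.
rewrite weval_rcons permM gen_val (IH _ _ ht).
have -> : (i : nat) = m by [].
by case_ifs; lia.
Qed.

(* the transposition (0 n), i.e. the element w of the theorem *)
Definition wtrans : 'S_n.+1 := tperm ord0 ord_max.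

Lemma size_wword : size (wword n) = n + n.-1.
Proof. by rewrite /wword size_cat size_enum_ord size_behead size_rev size_enum_ord. Qed.

Lemma weval_le_stable t i : i \notin t -> forall z : 'I_n.+1,
  ((weval t z : nat) <= i) = ((z : nat) <= i).
Proof.
elim: t => [|j t IH] /=; first by move=> _ z; rewrite perm1.
rewrite in_cons negb_or => /andP [hij hi] z; rewrite permM IH // gen_val.
by ord_neq_nat; case_ifs; lia.
Qed.

Lemma weval_fix t (z : 'I_n.+1) :
  (forall j, j \in t -> ((j : nat) != z) && ((j : nat).+1 != z)) -> weval t z = z.
Proof.
elim: t => [|j t IH] h /=; first by rewrite perm1.
rewrite permM gen_fix; first by apply: IH => c hc; apply: h; rewrite in_cons hc orbT.
  by have /andP [] := h j (mem_head _ _); rewrite eq_sym.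
by have /andP [_] := h j (mem_head _ _); rewrite eq_sym.
Qed.

Lemma uniq_split (T : eqType) (s : seq T) a : uniq s -> a \in s ->
  exists s1 s2, [/\ s = s1 ++ a :: s2, a \notin s1 & a \notin s2].
Proof.
move=> hu hin; case/splitPr: hin hu => s1 s2; rewrite cat_uniq cons_uniq.
move=> /and3P [_ /hasPn h /andP [a_s2 _]].
by exists s1, s2; split => //; exact: h a (mem_head _ _).
Qed.

Lemma ncross_word_once t i : uniq t -> i \in t -> ncross (weval t) i = 1.
Proof.
move=> hu hin; have [t1 [t2 [-> h1 h2]]] := uniq_split hu hin.
rewrite weval_cat weval_cons; set P := weval t1; set Q := weval t2.
rewrite /ncross (_ : crossing _ _ = [set (P^-1)%g (widen_ord (leqnSn n) i)]) ?cards1 //.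
apply/setP => z; rewrite in_crossing in_set1 !permM.
have -> : (z == (P^-1)%g (widen_ord (leqnSn n) i)) = ((P z : nat) == i).
  apply/eqP/eqP => [->|e]; first by rewrite permKV.
  by apply: (@perm_inj _ P); rewrite permKV; apply: ord_inj.
rewrite ltnNge (weval_le_stable h2) -(weval_le_stable h1 z) gen_val -/P.
by case_ifs; lia.
Qed.

Lemma ncross_word_absent t i : i \notin t -> ncross (weval t) i = 0.
Proof.
move=> hi; apply/eqP; rewrite cards_eq0; apply/eqP/setP => z.
by rewrite in_crossing inE ltnNge (weval_le_stable hi); lia.
Qed.

(* A word using every generator once has no fixed point: look at the first
   generator of the word that moves z. *)
Lemma weval_no_fix t : 0 < n -> uniq t -> (forall j, j \in t) ->
  forall z : 'I_n.+1, weval t z != z.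
Proof.
move=> hn hu hall z.
pose adj (j : 'I_n) := ((j : nat) == z) || ((j : nat).+1 == z).
have j0 : 'I_n := Ordinal hn.
have hhas : has adj t.
  have hz := ltn_ord z; case: (ltnP z n) => hzn.
    by apply/hasP; exists (Ordinal hzn) => //; rewrite /adj /= eqxx.
  have hn1 : n.-1 < n by lia.
  by apply/hasP; exists (Ordinal hn1) => //; rewrite /adj /=; lia.
set k := find adj t; set j := nth j0 t k.
have hk : k < size t by rewrite -has_find.
have ht : t = take k t ++ j :: drop k.+1 t by rewrite /j -drop_nth // cat_take_drop.
have hj : adj j by apply: nth_find.
have htk : ~~ has adj (take k t) by rewrite has_take // ltnn.
have hjn : j \notin drop k.+1 t.
  by move: hu; rewrite {1}ht cat_uniq => /and3P [_ _]; rewrite cons_uniq => /andP [].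
rewrite ht weval_cat weval_cons !permM.
rewrite (@weval_fix (take k t) z); last first.
  by move=> c hc; have := hasPn htk c hc; rewrite /adj; lia.
have := weval_le_stable hjn (gen j z); move: hj.
by rewrite -(inj_eq (@ord_inj _)) gen_val /adj; case_ifs; lia.
Qed.

End TheoremWords.

Lemma wword_tperm (n : nat) : 0 < n -> weval (wword n) = wtrans n.
Proof.
rewrite /wtrans; case: n => // n' _; apply/permP => z; apply: ord_inj.
rewrite /wword weval_cat permM.
have h1 : map val (enum 'I_n'.+1) = iota 0 n'.+1 by rewrite val_enum_ord.
have h2 : map val (behead (rev (enum 'I_n'.+1))) = rev (iota 0 n').
  by rewrite -behead_map map_rev h1 -addn1 iotaD rev_cat.
rewrite (weval_descending h2) (weval_ascending h1) tpermE_if.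
have -> : (z == ord0) = ((z : nat) == 0) by [].
have -> : (z == ord_max) = ((z : nat) == n'.+1) by [].
by have := ltn_ord z; case_ifs; rewrite /=; lia.
Qed.

Section Excision.
Variable n : nat.
Implicit Types (u v y : 'S_n.+1).

Definition one_crossing u := forall i, i < n -> ncross u i = 1.

Definition excise u (k : 'I_n.+1) := (u * tperm k (u k))%g.

Definition fixset u : {set 'I_n.+1} := [set z | u z == z].

Definition interior : {set 'I_n.+1} := [set z : 'I_n.+1 | 0 < (z : nat) < n].

Lemma in_fixset u z : (z \in fixset u) = (u z == z).
Proof. by rewrite inE. Qed.

Lemma in_interior z : (z \in interior) = (0 < (z : nat) < n).
Proof. by rewrite inE. Qed.

Lemma one_crossing_uniq u i z z' : one_crossing u -> i < n ->
  z \in crossing u i -> z' \in crossing u i -> z = z'.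
Proof.
move=> hu hi hz hz'; have /card_le1P h : ncross u i <= 1 by rewrite hu.
by move: (h _ hz z'); rewrite hz' inE => /esym /eqP ->.
Qed.

Lemma one_crossing_ex u i : one_crossing u -> i < n ->
  exists z : 'I_n.+1, ((z : nat) <= i) && (i < u z).
Proof.
move=> hu hi; have : 0 < ncross u i by rewrite hu.
by rewrite /ncross card_gt0 => /set0Pn [z]; rewrite in_crossing; exists z.
Qed.

Lemma one_crossing_2cycle u (a b : 'I_n.+1) : one_crossing u -> (a : nat) < b ->
  u a = b -> u b = a -> (a : nat) = 0 /\ (b : nat) = n.
Proof.
move=> hu hab hua hub; have hbn := ltn_ord b.
have ha0 : (a : nat) = 0.
  case: (posnP a) => // ha.
  have ina : a \in crossing u a by rewrite in_crossing hua; lia.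
  have [p /andP [hp1 hp2]] := one_crossing_ex hu (ltac:(lia) : (a : nat).-1 < n).
  have hpa : u p != a by rewrite -hub (inj_eq perm_inj) -(inj_eq (@ord_inj _)); lia.
  have inp : p \in crossing u a by rewrite in_crossing; ord_neq_nat; lia.
  by have := one_crossing_uniq (i := a) hu (ltac:(lia)) ina inp => /(f_equal val) /=; lia.
split => //; case: (ltnP b n) => hb; last lia.
have [p /andP [hp1 hp2]] := one_crossing_ex hu hb.
have hp0 : p != a by apply/negP => /eqP e; rewrite e hua in hp2; lia.
have hpb : p != b by apply/negP => /eqP e; rewrite e hub in hp2; lia.
have in0 : a \in crossing u (b : nat).-1 by rewrite in_crossing hua; lia.
have inp : p \in crossing u (b : nat).-1 by rewrite in_crossing; ord_neq_nat; lia.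
by have := one_crossing_uniq (i := (b : nat).-1) hu (ltac:(lia)) in0 inp => /(f_equal val) /=; ord_neq_nat; lia.
Qed.

Lemma one_crossing_monotone u (k c : 'I_n.+1) : one_crossing u -> 0 < (k : nat) < n ->
  u c = k -> u k != k ->
  ((c : nat) < k /\ (k : nat) < u k) \/ ((k : nat) < c /\ (u k : nat) < k).
Proof.
move=> hu hk hc huk.
have hck : c != k by apply/negP => /eqP e; move: hc huk; rewrite e => ->; rewrite eqxx.
ord_neq_nat.
case: (ltngtP c k) => h1; last lia.
- case: (ltngtP k (u k)) => h2; [by left | exfalso | lia].
  have [p /andP [hp1 hp2]] := one_crossing_ex hu (ltac:(lia) : (k : nat) < n).
  have hpk : p != k by apply/negP => /eqP e; rewrite e in hp2; lia.
  have hpc : p != c by apply/negP => /eqP e; rewrite e hc in hp2; lia.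
  have inc : c \in crossing u (k : nat).-1 by rewrite in_crossing hc; lia.
  have inp : p \in crossing u (k : nat).-1 by rewrite in_crossing; ord_neq_nat; lia.
  by have := one_crossing_uniq (i := (k : nat).-1) hu (ltac:(lia)) inc inp => /(f_equal val) /=; ord_neq_nat; lia.
- case: (ltngtP k (u k)) => h2; [exfalso | by right | lia].
  have [p /andP [hp1 hp2]] := one_crossing_ex hu (ltac:(lia) : (k : nat).-1 < n).
  have hpc : u p != k by rewrite -hc (inj_eq perm_inj) -(inj_eq (@ord_inj _)); lia.
  have ink : k \in crossing u k by rewrite in_crossing; lia.
  have inp : p \in crossing u k by rewrite in_crossing; ord_neq_nat; lia.
  by have := one_crossing_uniq (i := k) hu (ltac:(lia)) ink inp => /(f_equal val) /=; lia.
Qed.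

Lemma exciseE u k : excise u k = (tperm ((u^-1)%g k) k * u)%g.
Proof. by rewrite /excise mul_tperm_conj permK. Qed.

(* Excision of a non-fixed interior point adds an inversion and keeps the
   one-crossing property: it swaps the monotone pair (c, k) of positions. *)
Lemma excise_one_crossing u (k : 'I_n.+1) : one_crossing u -> 0 < (k : nat) < n ->
  u k != k -> ninv u < ninv (excise u k) /\ one_crossing (excise u k).
Proof.
move=> hu hk huk; set c := (u^-1)%g k.
have hc : u c = k by rewrite permKV.
rewrite exciseE -/c.
case: (one_crossing_monotone hu hk hc huk) => [[h1 h2]|[h1 h2]]; last rewrite tpermC.
- have hu' : (u c : nat) < u k by rewrite hc.
  split; first exact: ninv_tperm_lt.
  move=> i hi; have [] := ncross_tperm i h1 hu'; rewrite hu // hc.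
  have -> : [&& (c : nat) <= i, i < k, (k : nat) <= i & i < u k] = false by lia.
  by move=> d1 d2; apply/eqP; rewrite eqn_leq d1 -(addn0 1) d2.
- have hu' : (u k : nat) < u c by rewrite hc.
  split; first exact: ninv_tperm_lt.
  move=> i hi; have [] := ncross_tperm i h1 hu'; rewrite hu // hc.
  have -> : [&& (k : nat) <= i, i < c, (u k : nat) <= i & i < k] = false by lia.
  by move=> d1 d2; apply/eqP; rewrite eqn_leq d1 -(addn0 1) d2.
Qed.

Lemma fixset_excise u (k : 'I_n.+1) : one_crossing u -> 0 < (k : nat) < n -> u k != k ->
  fixset (excise u k) = k |: fixset u.
Proof.
move=> hu hk huk; apply/setP => z; rewrite in_setU1 !in_fixset /excise permM.
case: (eqVneq z k) => [->|hzk] /=; first by rewrite tpermR eqxx.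
case: (eqVneq (u z) z) => [e|ne].
  have hz2 : u k != z.
    apply/negP => /eqP e2; have /perm_inj e3 : u k = u z by rewrite e2 e.
    by rewrite e3 eqxx in hzk.
  by rewrite e tpermD ?eqxx // eq_sym.
rewrite tpermE_if; case: (eqVneq (u z) k) => [e|ne2].
  case: (eqVneq (u k) z) => [e2|//]; exfalso.
  case: (ltngtP k z) => h.
  - by have := one_crossing_2cycle hu h e2 e; lia.
  - by have := one_crossing_2cycle hu h e e2; lia.
  - by move/ord_inj: h => h; rewrite h eqxx in hzk.
case: (eqVneq (u z) (u k)) => [/perm_inj e|_]; first by rewrite e eqxx in hzk.
by rewrite (negbTE ne).
Qed.

Lemma card_fixset_excise u (k : 'I_n.+1) : one_crossing u -> 0 < (k : nat) < n ->
  u k != k -> #|fixset (excise u k)| = #|fixset u|.+1.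
Proof.
by move=> hu hk huk; rewrite (fixset_excise hu hk huk) cardsU1 in_fixset huk add1n.
Qed.

Lemma one_crossing_wtrans : one_crossing (wtrans n).
Proof.
move=> i hi; rewrite /ncross (_ : crossing _ _ = [set ord0]) ?cards1 //.
apply/setP => z; rewrite in_crossing in_set1 /wtrans tpermE_if -!(inj_eq (@ord_inj _)) /=.
by have := ltn_ord z; case_ifs; rewrite /=; lia.
Qed.

Hypothesis n_gt0 : 0 < n.

Lemma fixset_wtrans : fixset (wtrans n) = interior.
Proof.
apply/setP => z; rewrite in_fixset in_interior /wtrans tpermE_if -!(inj_eq (@ord_inj _)) /=.
by have := ltn_ord z; case_ifs; rewrite /=; lia.
Qed.

Lemma card_interior : #|interior| = n.-1.
Proof.
have e : interior = ~: [set ord0; ord_max].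
  apply/setP => z; rewrite in_interior !inE -!(inj_eq (@ord_inj _)) /=.
  by have := ltn_ord z; lia.
have := cardsC [set (ord0 : 'I_n.+1); ord_max].
rewrite -e cards2 card_ord -(inj_eq (@ord_inj _)) /=.
have -> : (0 == n) = false by lia.
move=> h; have h2 : #|interior| + 2 = n.+1 by rewrite addnC; exact: h.
by apply/eqP; rewrite -(eqn_add2r 2) h2; lia.
Qed.

(* The cuts next to 0 and n are crossed, so 0 and n are not fixed. *)
Lemma one_crossing_fix_interior u z : one_crossing u -> u z = z -> 0 < (z : nat) < n.
Proof.
move=> hu hz; have hzn := ltn_ord z; apply/andP; split.
  case: (posnP z) => // z0.
  have [p /andP [hp1 hp2]] := one_crossing_ex hu n_gt0.
  have ep : p = z by apply: ord_inj; lia.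
  by rewrite ep hz in hp2; lia.
case: (ltnP z n) => // hzn'.
have [p /andP [hp1 hp2]] := one_crossing_ex hu (ltac:(lia) : n.-1 < n).
have /perm_inj ep : u p = u z by apply: ord_inj; rewrite hz; have := ltn_ord (u p); lia.
by rewrite ep in hp1; lia.
Qed.

Lemma excise_bruhat_step u k : u k != k -> ninv u < ninv (excise u k) ->
  bruhat_step u (excise u k).
Proof.
move=> huk hl; exists (tperm k (u k)); split; last by rewrite !coxlenE.
by apply: (tperm_reflection n_gt0); rewrite eq_sym.
Qed.

Lemma one_crossing_eq_wtrans u : one_crossing u -> interior \subset fixset u -> u = wtrans n.
Proof.
move=> hu hs.
have hfix (z : 'I_n.+1) : 0 < (z : nat) < n -> u z = z.
  by move=> hz; apply/eqP; rewrite -in_fixset; apply: (subsetP hs); rewrite in_interior.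
have hend (z : 'I_n.+1) : ~~ (0 < (z : nat) < n) -> (u z : nat) = n - z.
  move=> hz; have h1 : u z != z.
    by apply/negP => /eqP e; have := one_crossing_fix_interior hu e; rewrite (negbTE hz).
  have h2 : ~~ (0 < (u z : nat) < n).
    by apply/negP => /hfix /perm_inj e; rewrite e eqxx in h1.
  by have := ltn_ord z; have := ltn_ord (u z); ord_neq_nat; lia.
apply/permP => z; apply: ord_inj; rewrite /wtrans tpermE_if -!(inj_eq (@ord_inj _)) /=.
have hz := ltn_ord z; case: (boolP (0 < (z : nat) < n)) => hm.
  by rewrite hfix //; case_ifs; rewrite /=; lia.
by rewrite hend //; case_ifs; rewrite /=; lia.
Qed.

Lemma excise_to_wtrans m : forall u, one_crossing u -> #|interior :\: fixset u| = m ->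
  bruhat u (wtrans n) /\ ninv u + m <= ninv (wtrans n).
Proof.
elim: m => [|m IH] u hu hm.
  move/eqP: hm; rewrite cards_eq0 setD_eq0 => hs.
  by rewrite (one_crossing_eq_wtrans hu hs) addn0; split => //; apply: rt_refl.
have : 0 < #|interior :\: fixset u| by rewrite hm.
rewrite card_gt0 => /set0Pn [k]; rewrite inE in_interior in_fixset => /andP [huk hk].
have [hl hu'] := excise_one_crossing hu hk huk.
have hm' : #|interior :\: fixset (excise u k)| = m.
  rewrite (fixset_excise hu hk huk) setDUr.
  have hin : k \in interior :\: fixset u by rewrite inE in_interior in_fixset huk hk.
  move: hm; rewrite (cardsD1 k) hin add1n => -[<-].
  apply: eq_card => z; rewrite !inE.
  by case: (z != k); case: (u z != z); case: (0 < (z : nat)); case: ((z : nat) < n).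
have [hb hle] := IH _ hu' hm'.
split; last lia.
by apply: rt_trans hb; apply: rt_step; apply: excise_bruhat_step.
Qed.

End Excision.

Section CoxeterElement.
Variable n : nat.
Hypothesis n_gt0 : 0 < n.
Variable pi : 'S_n.

Definition coxeter_word : seq 'I_n := map pi (enum 'I_n).

Definition coxeter_elt : 'S_n.+1 := weval coxeter_word.

Lemma coxeter_word_uniq : uniq coxeter_word.
Proof. by rewrite (map_inj_uniq perm_inj) enum_uniq. Qed.

Lemma mem_coxeter_word j : j \in coxeter_word.
Proof. by apply/mapP; exists ((pi^-1)%g j); rewrite ?mem_enum ?permKV. Qed.

Lemma one_crossing_coxeter : one_crossing coxeter_elt.
Proof.
move=> i hi.
exact: (ncross_word_once (i := Ordinal hi) coxeter_word_uniq (mem_coxeter_word _)).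
Qed.

Lemma fixset_coxeter : fixset coxeter_elt = set0.
Proof.
apply/setP => z; rewrite in_fixset inE.
by rewrite (negbTE (weval_no_fix n_gt0 coxeter_word_uniq mem_coxeter_word z)).
Qed.

(* A word of x needs every generator, since a missing one leaves a cut
   uncrossed. *)
Lemma ninv_coxeter : ninv coxeter_elt = n.
Proof.
apply/eqP; rewrite eqn_leq; apply/andP; split.
  by have := ninv_weval_le coxeter_word; rewrite size_map size_enum_ord.
have [t [ht hs]] := exists_word_ninv coxeter_elt.
rewrite -hs -{1}(size_enum_ord n); apply: uniq_leq_size; first exact: enum_uniq.
move=> j _; apply/negPn/negP => hj.
by have := ncross_word_absent hj; rewrite ht (one_crossing_coxeter (ltn_ord j)).
Qed.

End CoxeterElement.

(* The length of w is n + (n - 1): it is at most the size of its word, and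
   excising the n - 1 interior points of a Coxeter element reaches w. *)
Lemma ninv_wtrans (n : nat) (n_gt0 : 0 < n) : ninv (wtrans n) = n + n.-1.
Proof.
apply/eqP; rewrite eqn_leq; apply/andP; split.
  by have := ninv_weval_le (wword n); rewrite size_wword (wword_tperm n_gt0).
have [_] := excise_to_wtrans n_gt0 (one_crossing_coxeter (1%g : 'S_n)) erefl.
by rewrite fixset_coxeter // setD0 (card_interior n_gt0) ninv_coxeter.
Qed.

(* Comparing lengths at both ends of the interval
   gives l(y) = n + #|fixset y|, so inside the interval every Bruhat step
   is an excision and fixed-point sets grow along the order. *)
Section Interval.
Variable n : nat.
Variable pi : 'S_n.
Implicit Types (u v y : 'S_n.+1).

Definition in_interval y := bruhat (coxeter_elt pi) y /\ bruhat y (wtrans n).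

Lemma one_crossing_interval y : in_interval y -> one_crossing y.
Proof.
move=> [h1 h2] i hi.
have := ncross_bruhat i h1; have := ncross_bruhat i h2.
by rewrite (one_crossing_coxeter pi hi) (one_crossing_wtrans hi); lia.
Qed.

Lemma in_interval_mid u y v : in_interval u -> in_interval v ->
  bruhat u y -> bruhat y v -> in_interval y.
Proof. by move=> [hxu _] [_ hvw] huy hyv; split; [exact: rt_trans hxu huy | exact: rt_trans hyv hvw]. Qed.

Hypothesis n_gt0 : 0 < n.

Lemma one_crossing_tperm_cases u v (a b : 'I_n.+1) : one_crossing u -> one_crossing v ->
  v = (u * tperm a b)%g -> a != b ->
  (fixset v \subset fixset u) \/
  (exists k : 'I_n.+1, [/\ 0 < (k : nat) < n, u k != k & v = excise u k]).
Proof.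
move=> hu hv ev hab; have hvz z : v z = tperm a b (u z) by rewrite ev permM.
case: (eqVneq (u a) b) => hua; case: (eqVneq (u b) a) => hub.
- exfalso.
  have va : v a = a by rewrite hvz hua tpermR.
  have vb : v b = b by rewrite hvz hub tpermL.
  have := one_crossing_fix_interior n_gt0 hv va.
  have := one_crossing_fix_interior n_gt0 hv vb.
  case: (ltngtP a b) => h.
  + by have := one_crossing_2cycle hu h hua hub; lia.
  + by have := one_crossing_2cycle hu h hub hua; lia.
  + by move/ord_inj: h => h; rewrite h eqxx in hab.
- right; exists a; split.
  + by apply: (one_crossing_fix_interior n_gt0 hv); rewrite hvz hua tpermR.
  + by rewrite hua eq_sym.
  + by rewrite ev /excise hua.
- right; exists b; split.
  + by apply: (one_crossing_fix_interior n_gt0 hv); rewrite hvz hub tpermL.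
  + by rewrite hub.
  + by rewrite ev /excise hub tpermC.
- left; apply/subsetP => z; rewrite !in_fixset hvz tpermE_if.
  case: (eqVneq (u z) a) => [e /eqP ezb|ne1]; first by rewrite ezb e eqxx in hub.
  case: (eqVneq (u z) b) => [e /eqP eza|//]; by rewrite eza e eqxx in hua.
Qed.

Lemma fixset_length_balance u v : bruhat u v -> in_interval u -> in_interval v ->
  #|fixset v| + ninv u <= #|fixset u| + ninv v.
Proof.
elim=> [y z hs|y|y m z h1 IH1 h2 IH2] hy hz; last 1 first.
- have hm := in_interval_mid hy hz h1 h2.
  by have := IH1 hy hm; have := IH2 hm hz; lia.
- have [r [hr [ez hl]]] := hs; rewrite !coxlenE in hl.
  have [a [b [hab er]]] := reflection_tperm hr; rewrite er in ez.
  have := one_crossing_tperm_cases (one_crossing_interval hy) (one_crossing_interval hz) ez hab.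
  case=> [hsub|[k [hk hyk ev]]]; first by have := subset_leq_card hsub; lia.
  by rewrite ev (card_fixset_excise (one_crossing_interval hy) hk hyk) -ev; lia.
- lia.
Qed.

Lemma ninv_interval y : in_interval y -> ninv y = n + #|fixset y|.
Proof.
move=> hy.
have hx : in_interval (coxeter_elt pi) by split; [apply: rt_refl | exact: rt_trans hy.1 hy.2].
have hw : in_interval (wtrans n) by split; [exact: rt_trans hy.1 hy.2 | apply: rt_refl].
have := fixset_length_balance hy.1 hx hy; have := fixset_length_balance hy.2 hy hw.
rewrite fixset_coxeter // cards0 ninv_coxeter fixset_wtrans //.
by rewrite (card_interior n_gt0) (ninv_wtrans n_gt0); lia.
Qed.

Lemma interval_step_excise u v : in_interval u -> in_interval v -> bruhat_step u v ->
  exists k : 'I_n.+1, [/\ 0 < (k : nat) < n, u k != k & v = excise u k].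
Proof.
move=> hu hv [r [hr [ev hl]]]; rewrite !coxlenE in hl.
have [a [b [hab er]]] := reflection_tperm hr; rewrite er in ev.
have := one_crossing_tperm_cases (one_crossing_interval hu) (one_crossing_interval hv) ev hab.
case=> [hsub|//]; have := subset_leq_card hsub.
by move: hl; rewrite (ninv_interval hu) (ninv_interval hv); lia.
Qed.

Lemma fixset_mono u v : bruhat u v -> in_interval u -> in_interval v ->
  fixset u \subset fixset v.
Proof.
elim=> [y z hs|y //|y m z h1 IH1 h2 IH2] hy hz.
  have [k [hk hyk ->]] := interval_step_excise hy hz hs.
  by rewrite (fixset_excise (one_crossing_interval hy) hk hyk) subsetUr.
have hm := in_interval_mid hy hz h1 h2.
exact: subset_trans (IH1 hy hm) (IH2 hm hz).
Qed.

End Interval.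

(* Shortcuts of a permutation x: u shortcuts x when each non-fixed point z
   of u is sent to the first point of its x-orbit z -> x z -> x^2 z -> ...
   that is not fixed by u.  Such a u is determined by its fixed points,
   and excision preserves the property; since x shortcuts itself and
   every step in the interval is an excision, all elements of the
   interval shortcut x. *)
Section Shortcuts.
Variable n : nat.
Variable x : 'S_n.+1.
Implicit Types (u v : 'S_n.+1).

Definition shortcut u := forall z, u z != z -> exists m,
  [/\ 0 < m, u z = (x ^+ m)%g z & forall m', 0 < m' < m -> u ((x ^+ m')%g z) = (x ^+ m')%g z].

Lemma shortcut_refl : shortcut x.
Proof. by move=> z _; exists 1; split; rewrite ?expg1 //; lia. Qed.

Lemma expg_addn_app a b z : (x ^+ (a + b))%g z = (x ^+ b)%g ((x ^+ a)%g z).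
Proof. by rewrite expgD permM. Qed.

Lemma excise_fix u k p : u k != k -> u p = p -> excise u k p = p.
Proof.
move=> huk hp; rewrite /excise permM hp tpermD //.
  by apply/negP => /eqP e; rewrite e hp eqxx in huk.
apply/negP => /eqP e; have /perm_inj e2 : u k = u p by rewrite e hp.
by rewrite e2 hp eqxx in huk.
Qed.

(* Excising k joins the x-paths z -> k and k -> u k into one. *)
Lemma shortcut_excise u k : shortcut u -> u k != k -> shortcut (excise u k).
Proof.
move=> hu huk; have exz z : excise u k z = tperm k (u k) (u z) by rewrite /excise permM.
move=> z hz; case: (eqVneq z k) => [e|hzk]; first by rewrite e exz tpermR eqxx in hz.
case: (eqVneq (u z) k) => [e|ne].
- have [m1 [hm1 e1 f1]] := hu z (ltac:(by rewrite e eq_sym)).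
  have [m2 [hm2 e2 f2]] := hu k huk.
  have e1' : (x ^+ m1)%g z = k := etrans (esym e1) e.
  exists (m1 + m2); split; first lia.
    by rewrite exz e tpermL e2 expg_addn_app e1'.
  move=> m' hm'; case: (ltngtP m' m1) => h.
  + by apply: excise_fix => //; apply: f1; lia.
  + have -> : m' = m1 + (m' - m1) by lia.
    by rewrite expg_addn_app e1'; apply: excise_fix => //; apply: f2; lia.
  + by rewrite h e1' exz tpermR.
- have ez : excise u k z = u z by rewrite exz tpermD // ?(inj_eq perm_inj) eq_sym.
  have [m [hm e1 f1]] := hu z (ltac:(by rewrite -ez)).
  exists m; split => //; first by rewrite ez.
  by move=> m' hm'; apply: excise_fix => //; apply: f1.
Qed.

Lemma shortcut_inj u v : shortcut u -> shortcut v -> fixset u = fixset v -> u = v.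
Proof.
move=> hu hv hf; apply/permP => z.
case: (eqVneq (u z) z) => [e|ne].
  have : z \in fixset v by rewrite -hf in_fixset e.
  by rewrite in_fixset e => /eqP ->.
have ne' : v z != z by rewrite -in_fixset -hf in_fixset.
have [m1 [h1 e1 f1]] := hu z ne; have [m2 [h2 e2 f2]] := hv z ne'.
case: (ltngtP m1 m2) => h; last by rewrite e1 e2 h.
- have : u z \in fixset u by rewrite hf in_fixset e1 f2 ?h1.
  by rewrite in_fixset (inj_eq perm_inj) (negbTE ne).
- have : v z \in fixset v by rewrite -hf in_fixset e2 f1 ?h2.
  by rewrite in_fixset (inj_eq perm_inj) (negbTE ne').
Qed.

Lemma excise_up_to (hn : 0 < n) m : forall y (C : {set 'I_n.+1}),
  one_crossing y -> shortcut y -> fixset y \subset C -> C \subset interior n ->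
  #|C :\: fixset y| = m ->
  exists y', [/\ bruhat y y', one_crossing y', shortcut y' & fixset y' = C].
Proof.
elim: m => [|m IH] y C hy hq hs hC hm.
  move/eqP: hm; rewrite cards_eq0 setD_eq0 => hs'.
  by exists y; split => //; [exact: rt_refl | apply/eqP; rewrite eqEsubset hs hs'].
have : 0 < #|C :\: fixset y| by rewrite hm.
rewrite card_gt0 => /set0Pn [k]; rewrite inE in_fixset => /andP [hyk hkC].
have hk : 0 < (k : nat) < n by rewrite -in_interior; apply: (subsetP hC).
have [hl hy'] := excise_one_crossing hy hk hyk.
have hF := fixset_excise hy hk hyk.
have hs' : fixset (excise y k) \subset C by rewrite hF subUset sub1set hkC hs.
have hm' : #|C :\: fixset (excise y k)| = m.
  move: hm; rewrite hF (cardsD1 k (C :\: fixset y)) inE in_fixset hyk hkC add1n => -[<-].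
  apply: eq_card => z; rewrite !inE.
  by case: (z == k); case: (y z == z); case: (z \in C).
have [y' [hb hy'' hq' hf']] := IH _ _ hy' (shortcut_excise hq hyk) hs' hC hm'.
exists y'; split => //.
by apply: rt_trans hb; apply: rt_step; apply: excise_bruhat_step.
Qed.

End Shortcuts.

(* Every element of the interval shortcuts x: induct along a chain of
   excisions from x. *)
Lemma shortcut_interval n (n_gt0 : 0 < n) (pi : 'S_n) (y : 'S_n.+1) :
  in_interval pi y -> shortcut (coxeter_elt pi) y.
Proof.
move=> [h1 h2]; move: h2; have := clos_rt_rtn1 _ _ _ _ h1.
elim=> [|y' z hs hyz IH] hzw; first exact: shortcut_refl.
have hxy : bruhat (coxeter_elt pi) y' by apply: clos_rtn1_rt.
have hyw : bruhat y' (wtrans n) by apply: rt_trans hzw; apply: rt_step.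
have hz : in_interval pi z by split => //; apply: rt_trans hxy (rt_step _ _ _ _ hs).
have [k [hk hyk ->]] := interval_step_excise n_gt0 (conj hxy hyw) hz hs.
exact: shortcut_excise (IH hyw) hyk.
Qed.

(* A reduced word containing a factor
   s_j s_(j+1) s_j cannot be commuted into the word obtained by the braid
   move, because commutation moves preserve the subword of letters j and
   j+1.  Such a reduced word exists for every permutation containing a
   321 pattern: peel descents off the left until the pattern occupies
   three consecutive positions. *)
Section BraidWords.
Variable n : nat.
Implicit Types (u : 'S_n.+1) (i j : 'I_n) (t : seq 'I_n).

Lemma braid_relation j j1 : (j1 : nat) = j.+1 ->
  (gen j * (gen j1 * gen j) = gen j1 * (gen j * gen j1))%g.
Proof.
move=> hj; apply/permP => z; apply: ord_inj; rewrite !permM !gen_val hj.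
by case_ifs; lia.
Qed.

Lemma gen_noncomm j j1 : (j1 : nat) = j.+1 -> (gen j * gen j1)%g <> (gen j1 * gen j)%g.
Proof.
move=> hj e; have := congr1 (fun p : 'S_n.+1 => (p (widen_ord (leqnSn n) j) : nat)) e.
by rewrite /= !permM !gen_val /= hj; case_ifs; lia.
Qed.

Definition pair_subword j j1 t := filter (fun c => (c == j) || (c == j1)) t.

Lemma pair_subword_comm j j1 t1 t2 : (j1 : nat) = j.+1 ->
  clos_refl_trans _ (@comm_move n) t1 t2 -> pair_subword j j1 t1 = pair_subword j j1 t2.
Proof.
move=> hj; elim=> [s1 s2 | s // | s1 s2 s3 _ e1 _ e2]; last by rewrite e1 e2.
move=> [a [b [i [i' [hc [-> ->]]]]]].
rewrite /pair_subword !filter_cat; congr (_ ++ (_ ++ _)) => /=.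
case: (eqVneq i i') => [->//|hii].
have hjj : j != j1 by rewrite -(inj_eq (@ord_inj _)); lia.
case: (boolP ((i == j) || (i == j1))) => hi; case: (boolP ((i' == j) || (i' == j1))) => hi' //.
exfalso; move: hi hi' hii hc.
case/orP => /eqP ->; case/orP => /eqP ->; rewrite ?eqxx // => _.
  exact: gen_noncomm.
by move/esym; exact: gen_noncomm.
Qed.

Definition has_braid_word u := exists a b j j1,
  (j1 : nat) = j.+1 /\ reduced_expr u (a ++ [:: j; j1; j] ++ b).

Lemma braid_word_not_fc u : has_braid_word u -> ~ fully_commutative u.
Proof.
move=> [a [b [j [j1 [hj [hw hs]]]]]] hfc.
have hred : reduced_expr u (a ++ [:: j1; j; j1] ++ b).
  split; last by rewrite -hs !size_cat.
  by rewrite -hw !weval_cat /= !mulg1 (braid_relation hj).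
have := pair_subword_comm hj (hfc _ _ (conj hw hs) hred).
rewrite /pair_subword !filter_cat => /eqP; rewrite eqseq_cat // => /andP [_].
rewrite eqseq_cat /= ?eqxx ?orbT //= => /andP [/eqP [e] _].
by rewrite e in hj; lia.
Qed.

Lemma reduced_cons u i t :
  (u (lift ord0 i) : nat) < u (widen_ord (leqnSn n) i) ->
  reduced_expr (gen i * u)%g t -> reduced_expr u (i :: t).
Proof.
move=> hi [hw hs]; split; first by rewrite weval_cons hw mulgA gen_invol mul1g.
by rewrite /= hs !coxlenE ninv_gen_descent.
Qed.

Lemma braid_word_descent u i :
  (u (lift ord0 i) : nat) < u (widen_ord (leqnSn n) i) ->
  has_braid_word (gen i * u)%g -> has_braid_word u.
Proof.
move=> hi [a [b [j [j1 [hj hred]]]]].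
by exists (i :: a), b, j, j1; split => //; exact: reduced_cons hi hred.
Qed.

Definition pattern321 u (p q r : 'I_n.+1) :=
  [/\ (p : nat) < q, (q : nat) < r, (u r : nat) < u q & (u q : nat) < u p].

Lemma braid_word_consecutive u (p q r : 'I_n.+1) : pattern321 u p q r ->
  (q : nat) = p.+1 -> (r : nat) = q.+1 -> has_braid_word u.
Proof.
move=> [hpq hqr hrq hqp] eq er; have hrn := ltn_ord r.
set j : 'I_n := Ordinal (ltac:(lia) : (p : nat) < n).
set j1 : 'I_n := Ordinal (ltac:(lia) : (p : nat).+1 < n).
have hwj : widen_ord (leqnSn n) j = p by apply: ord_inj.
have hlj : lift ord0 j = q by apply: ord_inj; rewrite lift0_val /=; lia.
have hwj1 : widen_ord (leqnSn n) j1 = q by apply: ord_inj; rewrite /=; lia.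
have hlj1 : lift ord0 j1 = r by apply: ord_inj; rewrite lift0_val /=; lia.
set u1 := (gen j * u)%g; set u2 := (gen j1 * u1)%g; set u3 := (gen j * u2)%g.
have u1q : u1 q = u p by rewrite permM -hlj /gen tpermR hwj.
have u1r : u1 r = u r by rewrite permM gen_fix //=; lia.
have u1p : u1 p = u q by rewrite permM -hwj /gen tpermL hlj.
have u2p : u2 p = u q by rewrite permM gen_fix ?u1p //=; lia.
have u2q : u2 q = u r by rewrite permM -hwj1 /gen tpermL hlj1 u1r.
have [t [ht hs]] := exists_word_ninv u3.
exists [::], t, j, j1; split => //.
apply: reduced_cons; first by rewrite hlj hwj.
apply: reduced_cons; first by rewrite hlj1 hwj1 u1q u1r; lia.
apply: reduced_cons; first by rewrite hlj hwj u2p u2q.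
by split; rewrite // coxlenE.
Qed.

(* A 321 pattern with a gap between its two upper positions q < r can be
   tightened: either position r - 1 already completes a pattern, or r - 1
   is a descent whose removal moves the value u r to position r - 1. *)
Lemma pattern321_shrink_top u (p q r : 'I_n.+1) : pattern321 u p q r -> (q : nat).+1 < r ->
  exists u' (r' : 'I_n.+1),
    [/\ pattern321 u' p q r', (r' : nat) < r & has_braid_word u' -> has_braid_word u].
Proof.
move=> [hpq hqr hrq hqp] hgap; have hrn := ltn_ord r.
set i : 'I_n := Ordinal (ltac:(lia) : (r : nat).-1 < n).
set r' := widen_ord (leqnSn n) i.
have hr' : (r' : nat) = (r : nat).-1 by [].
have hli : lift ord0 i = r by apply: ord_inj; rewrite lift0_val /=; lia.
case: (ltnP (u r') (u q)) => hc.
  by exists u, r'; split; try split; rewrite ?hr' //; lia.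
have hd : (u (lift ord0 i) : nat) < u r' by rewrite hli; lia.
exists (gen i * u)%g, r'; split; last exact: braid_word_descent.
- have ep : (gen i * u)%g p = u p by rewrite permM gen_fix //=; lia.
  have eq : (gen i * u)%g q = u q by rewrite permM gen_fix //=; lia.
  have er : (gen i * u)%g r' = u r by rewrite permM /gen tpermL hli.
  by split; rewrite ?ep ?eq ?er ?hr' //; lia.
- by rewrite hr'; lia.
Qed.

Lemma pattern321_shrink_bottom u (p q r : 'I_n.+1) : pattern321 u p q r -> (p : nat).+1 < q ->
  exists u' (p' : 'I_n.+1),
    [/\ pattern321 u' p' q r, (p : nat) < p' & has_braid_word u' -> has_braid_word u].
Proof.
move=> [hpq hqr hrq hqp] hgap; have hrn := ltn_ord r.
set i : 'I_n := Ordinal (ltac:(lia) : (p : nat) < n).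
set p' := lift ord0 i.
have hp' : (p' : nat) = (p : nat).+1 by rewrite lift0_val.
have hwi : widen_ord (leqnSn n) i = p by apply: ord_inj.
case: (ltnP (u q) (u p')) => hc.
  by exists u, p'; split; try split; rewrite ?hp' //; lia.
have hd : (u p' : nat) < u (widen_ord (leqnSn n) i) by rewrite hwi; lia.
exists (gen i * u)%g, p'; split; last exact: braid_word_descent.
- have ep : (gen i * u)%g p' = u p by rewrite permM /gen tpermR hwi.
  have eq : (gen i * u)%g q = u q by rewrite permM gen_fix //=; lia.
  have er : (gen i * u)%g r = u r by rewrite permM gen_fix //=; lia.
  by split; rewrite ?ep ?eq ?er ?hp' //; lia.
- by rewrite hp'; lia.
Qed.

Lemma pattern321_braid_word u (p q r : 'I_n.+1) : pattern321 u p q r -> has_braid_word u.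
Proof.
have [k hk] : exists k, (r : nat) - p <= k by exists (r - p).
elim: k u p q r hk => [|k IH] u p q r hk hpat; first by case: hpat; lia.
have [hpq hqr _ _] := hpat.
case: (ltnP q.+1 r) => gap_top.
  have [u' [r' [hpat' hr' imp]]] := pattern321_shrink_top hpat gap_top.
  by apply: imp; apply: (IH u' p q r') => //; lia.
case: (ltnP p.+1 q) => gap_bot.
  have [u' [p' [hpat' hp' imp]]] := pattern321_shrink_bottom hpat gap_bot.
  by apply: imp; apply: (IH u' p' q r) => //; lia.
by apply: (braid_word_consecutive hpat); lia.
Qed.

End BraidWords.

(* A fixed interior point k of a one-crossing permutation sits in the middle
   of a 321 pattern: the position p crossing the cut below k is sent above k,
   and some position above k must be sent below k, otherwise y would map
   p together with all positions above k into the positions above k. *)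
Lemma fixed_point_pattern321 n (y : 'S_n.+1) (k : 'I_n.+1) : one_crossing y ->
  y k = k -> 0 < (k : nat) < n -> exists p q, pattern321 y p k q.
Proof.
move=> hy hk hkm.
have [p /andP [hp1 hp2]] := one_crossing_ex hy (ltac:(lia) : (k : nat).-1 < n).
have hyp : (k : nat) < y p.
  have : y p != y k by rewrite (inj_eq perm_inj) -(inj_eq (@ord_inj _)); lia.
  by rewrite hk -(inj_eq (@ord_inj _)); lia.
case: (boolP [exists q : 'I_n.+1, ((k : nat) < q) && ((y q : nat) < k)]).
  by case/existsP => q /andP [hq1 hq2]; exists p, q; split; rewrite ?hk //; lia.
rewrite negb_exists => /forallP hall; exfalso.
set above := [set q : 'I_n.+1 | (k : nat) < q].
have hp_above : p \notin above by rewrite inE; lia.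
have hsub : y @: (p |: above) \subset above.
  apply/subsetP => _ /imsetP [z hz ->]; rewrite inE.
  move: hz; rewrite in_setU1 inE => /orP [/eqP -> //|hz].
  have := hall z; rewrite hz /= -leqNgt => hle.
  have : y z != y k by rewrite (inj_eq perm_inj) -(inj_eq (@ord_inj _)); lia.
  by rewrite -(inj_eq (@ord_inj _)) hk; lia.
have := subset_leq_card hsub; rewrite card_imset; last exact: perm_inj.
by rewrite cardsU1 hp_above /= add1n ltnn.
Qed.

Section BooleanInterval.
Variable n : nat.
Hypothesis n_gt0 : 0 < n.
Variable pi : 'S_n.

Definition interior_pt (i : 'I_n.-1) : 'I_n.+1 := inord i.+1.

Definition interior_fixset (y : 'S_n.+1) : {set 'I_n.-1} := interior_pt @^-1: fixset y.

Lemma interior_pt_val i : (interior_pt i : nat) = i.+1.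
Proof. by rewrite /interior_pt inordK //; have := ltn_ord i; lia. Qed.

Lemma interior_pt_inj : injective interior_pt.
Proof. by move=> i j e; apply: ord_inj; have := interior_pt_val i; rewrite e interior_pt_val; lia. Qed.

Lemma fixset_interior_pt y : one_crossing y -> fixset y = interior_pt @: interior_fixset y.
Proof.
move=> hy; apply/setP => p; apply/idP/imsetP => [|[i]]; last by rewrite inE => hi ->.
rewrite in_fixset => /eqP e; have hp := one_crossing_fix_interior n_gt0 hy e.
have ep : interior_pt (Ordinal (ltac:(lia) : (p : nat).-1 < n.-1)) = p.
  by apply: ord_inj; rewrite interior_pt_val /=; lia.
by eexists; last exact: esym ep; rewrite inE ep in_fixset e.
Qed.

Lemma interval_boolean_fixset :
  interval_boolean (coxeter_elt pi) (wtrans n) n.-1.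
Proof.
have hfix y : in_interval pi y -> fixset y = interior_pt @: interior_fixset y.
  by move=> hy; apply: fixset_interior_pt; exact: one_crossing_interval hy.
exists interior_fixset; split; [|split].
- move=> A; set C := interior_pt @: A.
  have hC : C \subset interior n.
    apply/subsetP => _ /imsetP [i _ ->].
    by rewrite in_interior interior_pt_val; have := ltn_ord i; lia.
  have hx0 : fixset (coxeter_elt pi) \subset C by rewrite fixset_coxeter // sub0set.
  have [y [hb hy hq hf]] :=
    excise_up_to n_gt0 (one_crossing_coxeter pi) (@shortcut_refl _ (coxeter_elt pi)) hx0 hC erefl.
  exists y; split => //; first exact: (excise_to_wtrans n_gt0 hy erefl).1.
  by apply/setP => i; rewrite inE hf mem_imset //; exact: interior_pt_inj.
- move=> y z hxy hyw hxz hzw e.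
  have hy : in_interval pi y by []; have hz : in_interval pi z by [].
  apply: (shortcut_inj (shortcut_interval n_gt0 hy) (shortcut_interval n_gt0 hz)).
  by rewrite (hfix _ hy) (hfix _ hz) e.
- move=> y z hxy hyw hxz hzw.
  have hy : in_interval pi y by []; have hz : in_interval pi z by [].
  split => [h|hs]; first by apply: preimsetS; exact: fixset_mono h hy hz.
  have hs' : fixset y \subset fixset z by rewrite (hfix _ hy) (hfix _ hz) imsetS.
  have hzm : fixset z \subset interior n.
    apply/subsetP => p; rewrite in_fixset in_interior => /eqP e.
    exact: (one_crossing_fix_interior n_gt0 (one_crossing_interval hz) e).
  have [y' [hb _ hq hf]] := excise_up_to n_gt0 (one_crossing_interval hy)
    (shortcut_interval n_gt0 hy) hs' hzm erefl.
  by rewrite (shortcut_inj (shortcut_interval n_gt0 hz) hq (esym hf)).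
Qed.

(* Above x, an element of the interval has a fixed point (its fixed-point
   set determines it, and x has none), hence a 321 pattern. *)
Lemma interval_not_fc y : in_interval pi y -> y <> coxeter_elt pi -> ~ fully_commutative y.
Proof.
move=> hy hne; have hoc := one_crossing_interval hy.
have : fixset y != set0.
  apply/negP => /eqP e; apply: hne.
  apply: (shortcut_inj (shortcut_interval n_gt0 hy) (@shortcut_refl _ (coxeter_elt pi))).
  by rewrite e fixset_coxeter.
case/set0Pn => k; rewrite in_fixset => /eqP hk.
have [p [q hpat]] := fixed_point_pattern321 hoc hk (one_crossing_fix_interior n_gt0 hoc hk).
exact: braid_word_not_fc (pattern321_braid_word hpat).
Qed.

End BooleanInterval.

Theorem mainTheorem10 (n : nat) (hn : 0 < n) (pi : 'S_n) :
  let w := weval (wword n) in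
  let x := weval (map pi (enum 'I_n)) in
  [/\ reduced_expr w (wword n),
      bruhat x w,
      interval_boolean x w (coxlen w - coxlen x)
    & forall y : 'S_n.+1, bruhat x y -> y <> x -> bruhat y w ->
        ~ fully_commutative y].
Proof.
move=> w x; rewrite /w /x (wword_tperm hn) -/(coxeter_word pi) -/(coxeter_elt pi).
split.
- by split; rewrite ?(wword_tperm hn) // coxlenE (ninv_wtrans hn) size_wword.
- exact: (excise_to_wtrans hn (one_crossing_coxeter pi) erefl).1.
- rewrite !coxlenE (ninv_wtrans hn) ninv_coxeter.
  by rewrite (_ : n + n.-1 - n = n.-1); [exact: interval_boolean_fixset | lia].
- by move=> y hxy hne hyw; apply: (interval_not_fc hn (conj hxy hyw)).
Qed.
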